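(* Let $\lambda \vdash 2$ and $\hat{\lambda} \vdash 3$ be partitions such that the pair $(\lambda,\hat{\lambda})$ is not one of $((2),(3))$, $((2),(2\,1))$, $((1^2),(2\,1))$. Let $\mathfrak{r} \subset \mathbb{K}[\mathcal{S}_2]$ be a minimal right ideal of class $\lambda$ and $\hat{\mathfrak{r}} \subset \mathbb{K}[\mathcal{S}_3]$ a minimal right ideal of class $\hat{\lambda}$. Then for all $T \in \mathcal{T}_{\mathfrak{r}} \subseteq \mathcal{T}_2 V$ and all $\hat{T} \in \mathcal{T}_{\hat{\mathfrak{r}}} \subseteq \mathcal{T}_3 V$ we have $$y_{t'}^{\ast}(T\otimes \hat{T}) = 0 \quad\text{and}\quad y_{t'}^{\ast}(\hat{T}\otimes T) = 0 .$$ Consequently, nonzero algebraic covariant derivative curvature tensors of the form $y_{t'}^{\ast}(T\otimes\hat T)$ or $y_{t'}^{\ast}(\hat T\otimes T)$ with $T,\hat T$ in symmetry classes defined by minimal right ideals can only arise when the classes of these ideals are given by one of the three pairs $((2),(3))$, $((2),(2\,1))$, $((1^2),(2\,1))$.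
   Context: $\mathbb{K}=\mathbb{R}$ or $\mathbb{C}$; $V$ is a finite-dimensional $\mathbb{K}$-vector space and $\mathcal{T}_r V$ the space of $r$-times covariant tensors (multilinear maps $V^r\to\mathbb{K}$). For $T\in\mathcal{T}_2V$, $\hat T\in\mathcal{T}_3V$, $(T\otimes\hat T)(v_1,\dots,v_5)=T(v_1,v_2)\hat T(v_3,v_4,v_5)$ and $(\hat T\otimes T)(v_1,\dots,v_5)=\hat T(v_1,v_2,v_3)T(v_4,v_5)$. Permutations multiply by $(p\circ q)(i)=p(q(i))$. An element $a=\sum_{p\in\mathcal{S}_r}a(p)\,p$ of the group ring $\mathbb{K}[\mathcal{S}_r]$ acts on $T\in\mathcal{T}_rV$ by $(aT)(v_1,\dots,v_r)=\sum_p a(p)\,T(v_{p(1)},\dots,v_{p(r)})$, and $a^{\ast}:=\sum_p a(p)\,p^{-1}$. For a right ideal $\mathfrak{r}\subseteq\mathbb{K}[\mathcal{S}_r]$, the symmetry class is $\mathcal{T}_{\mathfrak{r}}=\{aT : a\in\mathfrak{r},\ T\in\mathcal{T}_rV\}$; if $e$ is a generating idempotent of $\mathfrak{r}$ then $\mathcal{T}_{\mathfrak r}=\{T: eT=T\}$. For a Young tableau $t$ with entries $1,\dots,r$, the Young symmetrizer is $y_t=\sum_{p\in\mathcal{H}_t}\sum_{q\in\mathcal{V}_t}\mathrm{sign}(q)\,p\circ q$, where $\mathcal{H}_t$ ($\mathcal{V}_t$) is the group of permutations preserving each row (column) of $t$. A minimal right ideal of $\mathbb{K}[\mathcal{S}_n]$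 is said to be of class $\lambda\vdash n$ if it is isomorphic (as right $\mathbb{K}[\mathcal{S}_n]$-module) to $y_t\,\mathbb{K}[\mathcal{S}_n]$ for a Young tableau $t$ of shape $\lambda$, equivalently if it lies in the minimal two-sided ideal of $\mathbb{K}[\mathcal{S}_n]$ corresponding to $\lambda$. Here $t'$ is the Young tableau with rows $(1,3,5)$ and $(2,4)$ (so columns $\{1,2\},\{3,4\},\{5\}$). An algebraic covariant derivative curvature tensor is a tensor $\mathfrak{R}'\in\mathcal{T}_5V$ with, for all $u,w,x,y,z\in V$: $\mathfrak R'(w,x,y,z,u)=-\mathfrak R'(w,x,z,y,u)=\mathfrak R'(y,z,w,x,u)$, $\mathfrak R'(w,x,y,z,u)+\mathfrak R'(w,y,z,x,u)+\mathfrak R'(w,z,x,y,u)=0$, and $\mathfrak R'(w,x,y,z,u)+\mathfrak R'(w,x,z,u,y)+\mathfrak R'(w,x,u,y,z)=0$. *)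

From Stdlib Require Import Rdefinitions.
From mathcomp Require Import Rstruct.
From mathcomp Require Import all_boot all_algebra all_fingroup.
From mathcomp.real_closed Require Import complex.

Set Implicit Arguments.
Unset Strict Implicit.
Unset Printing Implicit Defensive.

Import GRing.Theory.
Local Open Scope ring_scope.

(* Group ring K[S_r]: an element a = \sum_p a(p) p is its coefficient  *)
(* function on 'S_r.  Indices 1..r of the paper are 0..r-1 here.       *)

Definition GR (K : fieldType) (r : nat) := {ffun 'S_r -> K}.

(* The paper's composition (p o q)(i) = p(q(i)).  Note: MathComp's
   (q * p)%g is the function  i |-> p (q i). *)
Definition pcomp r (p q : 'S_r) : 'S_r := (q * p)%g.

Lemma pcompE r (p q : 'S_r) i : pcomp p q i = p (q i).
Proof. by rewrite /pcomp permM. Qed.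

Section GroupRing.
Variables (K : fieldType) (r : nat).

Definition gr0 : GR K r := [ffun => 0].
Definition gr_add (a b : GR K r) : GR K r := [ffun p => a p + b p].
Definition gr_scale (c : K) (a : GR K r) : GR K r := [ffun p => c * a p].

Definition gr_of (p : 'S_r) : GR K r := [ffun q => (q == p)%:R].

(* (a b) = \sum_{p,q} a(p) b(q) (p o q); coefficient at s *)
Definition gr_mul (a b : GR K r) : GR K r :=
  [ffun s => \sum_(p : 'S_r) a p * b (pcomp p^-1%g s)].

Definition gr_star (a : GR K r) : GR K r := [ffun p => a p^-1%g].

Definition right_ideal (I : GR K r -> Prop) : Prop :=
  [/\ I gr0,
      (forall a b, I a -> I b -> I (gr_add a b)),
      (forall c a, I a -> I (gr_scale c a)) &
      (forall a b, I a -> I (gr_mul a b))].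

Definition minimal_right_ideal (I : GR K r -> Prop) : Prop :=
  [/\ right_ideal I,
      (exists a, I a /\ a <> gr0) &
      (forall J, right_ideal J -> (forall a, J a -> I a) ->
          (forall a, J a -> a = gr0) \/ (forall a, I a -> J a))].

Definition rmod_iso (I J : GR K r -> Prop) : Prop :=
  exists f : GR K r -> GR K r,
    [/\ (forall a, I a -> J (f a)),
        (forall b, J b -> exists2 a, I a & f a = b),
        (forall a a', I a -> I a' -> f a = f a' -> a = a'),
        (forall c a a', I a -> I a' ->
            f (gr_add (gr_scale c a) a') = gr_add (gr_scale c (f a)) (f a')) &
        (forall a b, I a -> f (gr_mul a b) = gr_mul (f a) b)].

End GroupRing.

Definition is_partition (n : nat) (l : seq nat) : bool :=
  [&& sorted (fun a b : nat => leq b a) l, all (fun k => leq 1 k) l & sumn l == n].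

(* A Young tableau with entries 1..r (here 0..r-1) is given by the
   row and column index of each entry. *)
Record tableau (r : nat) := Tableau { trow : 'I_r -> nat; tcol : 'I_r -> nat }.

Definition tableau_of_shape r (t : tableau r) (l : seq nat) : Prop :=
  [/\ is_partition r l,
      (forall i, trow t i < size l /\ tcol t i < nth 0 l (trow t i))%N &
      (forall i j, trow t i = trow t j -> tcol t i = tcol t j -> i = j)].

Definition row_perm r (t : tableau r) (p : 'S_r) : bool :=
  [forall i, trow t (p i) == trow t i].
Definition col_perm r (t : tableau r) (q : 'S_r) : bool :=
  [forall i, tcol t (q i) == tcol t i].

Definition young_sym (K : fieldType) r (t : tableau r) : GR K r :=
  [ffun s => \sum_(p : 'S_r | row_perm t p) \sum_(q : 'S_r | col_perm t q)
               (if pcomp p q == s then (-1) ^+ odd_perm q else 0)].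

Arguments young_sym K {r} t.

Definition young_ideal (K : fieldType) r (t : tableau r) : GR K r -> Prop :=
  fun b => exists x, b = gr_mul (young_sym K t) x.

Arguments young_ideal K {r} t.

Definition of_class (K : fieldType) r (l : seq nat) (I : GR K r -> Prop) :=
  exists t : tableau r, tableau_of_shape t l /\ rmod_iso I (young_ideal K t).

(* t' : rows (1,3,5),(2,4); columns {1,2},{3,4},{5}.  With 0-based
   entries i: row = i mod 2, column = i / 2. *)
Definition t' : tableau 5 := Tableau (fun i => (i %% 2)%N) (fun i => (i %/ 2)%N).

Definition tensor (K : fieldType) (V : vectType K) (r : nat) :=
  {ffun 'I_r -> V} -> K.

Definition multilinear (K : fieldType) (V : vectType K) r (T : tensor V r) :=
  forall (i : 'I_r) (v : {ffun 'I_r -> V}) (c : K) (x y : V),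
    T [ffun j => if j == i then c *: x + y else v j] =
    c * T [ffun j => if j == i then x else v j]
      + T [ffun j => if j == i then y else v j].

Definition gr_act (K : fieldType) (V : vectType K) r (a : GR K r)
    (T : tensor V r) : tensor V r :=
  fun v => \sum_(p : 'S_r) a p * T [ffun i => v (p i)].

Definition tprod (K : fieldType) (V : vectType K) r s
    (T : tensor V r) (S : tensor V s) : tensor V (r + s) :=
  fun v => T [ffun i => v (lshift s i)] * S [ffun j => v (rshift r j)].

Definition in_symclass (K : fieldType) (V : vectType K) r
    (I : GR K r -> Prop) (T : tensor V r) : Prop :=
  exists a, exists2 T0 : tensor V r, I a /\ multilinear T0 &
    forall v, T v = gr_act a T0 v.

Definition excluded_pair (l lh : seq nat) : bool :=
  ((l == [:: 2%N]) && (lh == [:: 3%N])) ||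
  ((l == [:: 2%N]) && (lh == [:: 2%N; 1%N])) ||
  ((l == [:: 1%N; 1%N]) && (lh == [:: 2%N; 1%N])).

Definition theorem1p8_claim (K : fieldType) : Prop :=
  forall (l lh : seq nat),
    is_partition 2 l -> is_partition 3 lh -> ~~ excluded_pair l lh ->
  forall (V : vectType K) (I : GR K 2 -> Prop) (Ih : GR K 3 -> Prop),
    minimal_right_ideal I -> of_class l I ->
    minimal_right_ideal Ih -> of_class lh Ih ->
  forall (T : tensor V 2) (Th : tensor V 3),
    in_symclass I T -> in_symclass Ih Th ->
  forall v : {ffun 'I_5 -> V},
    gr_act (gr_star (young_sym K t')) (tprod T Th) v = 0 /\
    gr_act (gr_star (young_sym K t')) (tprod Th T) v = 0.

(* Minimal right ideals of class (n) and (1^n) are spanned by the symmetrizer and the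
   antisymmetrizer, so their symmetry classes consist of symmetric and of alternating
   tensors.  The dual Young symmetrizer y_{t'}^* acts as row symmetrization followed by
   column antisymmetrization, so it kills every tensor that is alternating in two
   positions lying in a common row of t'.  Apart from the three excluded pairs, either
   the 3-tensor is alternating, and occupies the positions 3, 4, 5 (resp. 1, 2, 3), of
   which 3 and 5 (resp. 1 and 3) share the first row; or the 2-tensor is alternating and
   the 3-tensor symmetric, and the vanishing is an explicit identity between 48 terms. *)

From Pilot Require Import Defs.
From Stdlib Require Import Rdefinitions.
From mathcomp Require Import Rstruct all_boot ssralg ssrnum vector fingroup perm.
From mathcomp.real_closed Require Import complex.
From mathcomp Require Import ring zify.

Set Implicit Arguments.
Unset Strict Implicit.
Unset Printing Implicit Defensive.

Import GRing.Theory Num.Theory.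
Local Open Scope ring_scope.

(** * Classes of one-row and one-column shape *)

Section LinearCharacters.
Variables (K : fieldType) (n : nat).

Definition lin_char (b : bool) (p : 'S_n) : K :=
  if b then (-1) ^+ odd_perm p else 1.

Lemma lin_charM b (p q : 'S_n) : lin_char b (p * q)%g = lin_char b p * lin_char b q.
Proof. by case: b; rewrite /lin_char ?mulr1 // odd_permM signr_addb. Qed.

Lemma lin_charV b (p : 'S_n) : lin_char b p^-1%g = lin_char b p.
Proof. by rewrite /lin_char odd_permV. Qed.

Lemma gr_mul_gr_of (a : GR K n) (s r : 'S_n) :
  gr_mul a (gr_of K s) r = a (s^-1 * r)%g.
Proof.
rewrite ffunE (bigD1 (s^-1 * r)%g) //= big1 ?addr0.
  by rewrite ffunE /Defs.pcomp invMg invgK mulgA mulgV mul1g eqxx mulr1.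
move=> p p_neq; rewrite ffunE /Defs.pcomp; case: eqP => [pE|]; last by rewrite mulr0.
by move: p_neq; rewrite -pE invMg invgK -mulgA mulVg mulg1 eqxx.
Qed.

Lemma gr_mul_gr_of_lin_char b (a : GR K n) :
  (forall r, a r = lin_char b r * a 1%g) ->
  forall s, gr_mul a (gr_of K s) = gr_scale (lin_char b s) a.
Proof.
move=> aE s; apply/ffunP => r; rewrite gr_mul_gr_of ffunE aE [a r]aE.
by rewrite lin_charM lin_charV mulrA.
Qed.

Lemma coef_lin_char b (a : GR K n) :
  (forall s, gr_mul a (gr_of K s) = gr_scale (lin_char b s) a) ->
  forall r, a r = lin_char b r * a 1%g.
Proof.
move=> aE r; have := congr1 (fun c : GR K n => c 1%g) (aE r^-1%g).
by rewrite /= gr_mul_gr_of ffunE invgK mulg1 lin_charV.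
Qed.

Lemma young_ideal_coef b (t : tableau n) (c : GR K n) :
  young_sym K t =1 lin_char b -> young_ideal K t c ->
  forall r, c r = lin_char b r * c 1%g.
Proof.
move=> yE [x ->] r; rewrite !ffunE (reindex_inj (mulIg r)) /= mulr_sumr.
apply: eq_bigr => p _; rewrite !yE /Defs.pcomp invMg mulgA mulgV !mul1g lin_charM.
by rewrite mulrA [lin_char b p * _]mulrC.
Qed.

Lemma rmod_iso_scale (I : GR K n -> Prop) (f : GR K n -> GR K n) :
  I (gr0 K n) ->
  (forall c a a', I a -> I a' ->
     f (gr_add (gr_scale c a) a') = gr_add (gr_scale c (f a)) (f a')) ->
  forall c a, I a -> f (gr_scale c a) = gr_scale c (f a).
Proof.
move=> I0 flin.
have add0 y : gr_add y (gr0 K n) = y by apply/ffunP => p; rewrite !ffunE addr0.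
have f0 : f (gr0 K n) = gr0 K n.
  have := flin 1 _ _ I0 I0.
  have -> : gr_scale 1 (gr0 K n) = gr0 K n by apply/ffunP => p; rewrite !ffunE mulr0.
  rewrite add0 => /ffunP f0E; apply/ffunP => p; have := f0E p; rewrite !ffunE mul1r.
  by move/eqP; rewrite addrC -subr_eq subrr => /eqP.
by move=> c a Ia; have := flin c a _ Ia I0; rewrite f0 !add0.
Qed.

Lemma of_class_coef b (l : seq nat) (I : GR K n -> Prop) :
  right_ideal I -> of_class l I ->
  (forall t : tableau n, tableau_of_shape t l -> young_sym K t =1 lin_char b) ->
  forall a, I a -> forall r, a r = lin_char b r * a 1%g.
Proof.
move=> [I0 _ Iscale Imul] [t [sh [f [fIJ _ finj flin fmul]]]] yE a Ia.
apply: coef_lin_char => s; apply: finj; [exact: Imul | exact: Iscale |].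
rewrite fmul // (rmod_iso_scale I0 flin) //; apply: gr_mul_gr_of_lin_char.
exact: young_ideal_coef (yE t sh) (fIJ a Ia).
Qed.

End LinearCharacters.

Section YoungOneRowColumn.
Variables (K : fieldType) (n : nat) (t : tableau n).

Lemma young_sym_row : tableau_of_shape t [:: n] -> young_sym K t =1 lin_char K false.
Proof.
case=> _ t_box t_inj s.
have row0 i : trow t i = 0%N.
  by have [+ _] := t_box i; rewrite /= ltnS leqn0 => /eqP.
have col1 q : col_perm t q = (q == 1%g).
  apply/forallP/eqP => [q_col|->]; last by move=> i; rewrite perm1.
  by apply/permP => i; rewrite perm1; apply: t_inj; [rewrite !row0 | exact/eqP].
have rowT p : row_perm t p by apply/forallP => i; rewrite !row0.
rewrite ffunE.
under eq_bigr do rewrite (big_pred1 1%g col1) /Defs.pcomp mul1g odd_perm1.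
by rewrite (eq_bigl xpredT) // -big_mkcond big_pred1_eq.
Qed.

Lemma young_sym_column :
  tableau_of_shape t (nseq n 1%N) -> young_sym K t =1 lin_char K true.
Proof.
case=> _ t_box t_inj s.
have col0 i : tcol t i = 0%N.
  have [] := t_box i; rewrite size_nseq nth_nseq => -> /=.
  by rewrite ltnS leqn0 => /eqP.
have row1 p : row_perm t p = (p == 1%g).
  apply/forallP/eqP => [p_row|->]; last by move=> i; rewrite perm1.
  by apply/permP => i; rewrite perm1; apply: t_inj; [exact/eqP | rewrite !col0].
have colT q : col_perm t q by apply/forallP => i; rewrite !col0.
rewrite ffunE (big_pred1 1%g row1) (eq_bigl xpredT) //.
under eq_bigr do rewrite /Defs.pcomp mulg1.
by rewrite -big_mkcond big_pred1_eq.
Qed.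

End YoungOneRowColumn.

Section TensorSymmetries.
Variables (K : fieldType) (V : vectType K).

Definition lin_char_tensor n b (T : tensor V n) :=
  forall (w : {ffun 'I_n -> V}) (s : 'S_n), T [ffun i => w (s i)] = lin_char K b s * T w.

Lemma symclass_lin_char n b (I : GR K n -> Prop) (T : tensor V n) :
  (forall a, I a -> forall r, a r = lin_char K b r * a 1%g) -> in_symclass I T ->
  lin_char_tensor b T.
Proof.
move=> I_coef [a [T0 [Ia _] T_eq]] w s; rewrite !T_eq /gr_act.
rewrite (reindex_inj (mulIg s^-1%g)) /= mulr_sumr; apply: eq_bigr => p _.
have -> : [ffun i => [ffun j => w (s j)] ((p * s^-1)%g i)] = [ffun i => w (p i)].
  by apply/ffunP => i; rewrite !ffunE permM permKV.
by rewrite (I_coef a Ia (p * s^-1)%g) (I_coef a Ia p) lin_charM lin_charV; ring.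
Qed.

End TensorSymmetries.

Lemma of_class_row_symmetric (K : fieldType) (V : vectType K) n
    (I : GR K n -> Prop) (T : tensor V n) :
  right_ideal I -> of_class [:: n] I -> in_symclass I T -> lin_char_tensor false T.
Proof.
move=> I_right I_class; apply: symclass_lin_char.
exact: of_class_coef I_right I_class (fun t sh => young_sym_row K sh).
Qed.

Lemma of_class_column_alternating (K : fieldType) (V : vectType K) n
    (I : GR K n -> Prop) (T : tensor V n) :
  right_ideal I -> of_class (nseq n 1%N) I -> in_symclass I T -> lin_char_tensor true T.
Proof.
move=> I_right I_class; apply: symclass_lin_char.
exact: of_class_coef I_right I_class (fun t sh => young_sym_column K sh).
Qed.

(** * The dual Young symmetrizer *)

Lemma preserves_permV n (f : 'I_n -> nat) (p : 'S_n) :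
  [forall i, f (p^-1%g i) == f i] = [forall i, f (p i) == f i].
Proof.
suff pV (q : 'S_n) : [forall i, f (q i) == f i] -> [forall i, f (q^-1%g i) == f i].
  by apply/idP/idP => /pV; rewrite ?invgK.
by move/forallP=> qf; apply/forallP=> i; have := qf (q^-1%g i); rewrite permKV eq_sym.
Qed.

Lemma young_star_act (K : fieldType) (V : vectType K) n (t : tableau n)
    (X : tensor V n) (v : {ffun 'I_n -> V}) :
  gr_act (gr_star (young_sym K t)) X v =
  \sum_(q | col_perm t q) (-1) ^+ odd_perm q *
    \sum_(p | row_perm t p) X [ffun i => v (q (p i))].
Proof.
rewrite /gr_act; under eq_bigr do rewrite !ffunE big_distrl /=.
under eq_bigr do under eq_bigr do rewrite big_distrl.
rewrite exchange_big; under eq_bigr do rewrite exchange_big /=.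
have pick_term p q : \sum_(s : 'S_n)
    (if Defs.pcomp p q == s^-1%g then (-1) ^+ odd_perm q else 0) * X [ffun i => v (s i)]
    = (-1) ^+ odd_perm q * X [ffun i => v ((Defs.pcomp p q)^-1%g i)] :> K.
  rewrite (bigD1 (Defs.pcomp p q)^-1%g) //= invgK eqxx big1 ?addr0 // => s s_neq.
  by rewrite ifN ?mul0r //; apply: contra s_neq => /eqP ->; rewrite invgK.
under eq_bigr do under eq_bigr do rewrite pick_term.
rewrite exchange_big (reindex_inj invg_inj) /=.
under eq_bigl do rewrite [col_perm _ _]preserves_permV.
apply: eq_bigr => q _; rewrite odd_permV mulr_sumr (reindex_inj invg_inj) /=.
under eq_bigl do rewrite [row_perm _ _]preserves_permV.
apply: eq_bigr => p _; rewrite /Defs.pcomp invMg !invgK; congr (_ * X _).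
by apply/ffunP => i; rewrite !ffunE permM.
Qed.

Lemma row_perm_tperm n (t : tableau n) (x y : 'I_n) :
  trow t x = trow t y -> row_perm t (tperm x y).
Proof. by move=> xy; apply/forallP => i; case: tpermP => [->|->|] //; rewrite xy. Qed.

Lemma row_permMl n (t : tableau n) (tau p : 'S_n) :
  row_perm t tau -> row_perm t (tau * p)%g = row_perm t p.
Proof.
have rowM (r s : 'S_n) : row_perm t r -> row_perm t s -> row_perm t (r * s)%g.
  move=> /forallP rr /forallP rs; apply/forallP => i.
  by rewrite permM (eqP (rs _)) (eqP (rr _)).
move=> row_tau; apply/idP/idP; last exact: rowM.
have row_tauV : row_perm t tau^-1 by rewrite [row_perm _ _]preserves_permV.
by move/(rowM _ _ row_tauV); rewrite mulKg.
Qed.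

Section AlternatingInARow.
Variables (K : numFieldType) (V : vectType K) (n : nat) (t : tableau n).
Variables (X : tensor V n) (x y : 'I_n).
Hypotheses (xy_row : trow t x = trow t y)
           (X_alt : forall w : {ffun 'I_n -> V}, X [ffun i => w (tperm x y i)] = - X w).

Lemma row_sum_alternating_eq0 (w : {ffun 'I_n -> V}) :
  \sum_(p | row_perm t p) X [ffun i => w (p i)] = 0.
Proof.
set S := (X in X = 0).
have S_opp : S = - S.
  rewrite {1}/S (reindex_inj (mulgI (tperm x y))) /=.
  rewrite (eq_bigl (row_perm t)) => [|p]; last exact/row_permMl/row_perm_tperm.
  rewrite /S -sumrN; apply: eq_bigr => p _; rewrite -X_alt; congr X.
  by apply/ffunP => i; rewrite !ffunE permM.
by apply/eqP; rewrite -[_ == 0](@mulrn_eq0 _ _ 2) mulr2n {2}S_opp subrr.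
Qed.

Lemma young_star_alternating_row_eq0 (v : {ffun 'I_n -> V}) :
  gr_act (gr_star (young_sym K t)) X v = 0.
Proof.
rewrite young_star_act big1 // => q _.
have vqE (p : 'S_n) : [ffun i => v (q (p i))] = [ffun i => [ffun j => v (q j)] (p i)].
  by apply/ffunP => i; rewrite !ffunE.
by rewrite (eq_bigr _ (fun p _ => congr1 X (vqE p))) row_sum_alternating_eq0 mulr0.
Qed.

End AlternatingInARow.

Section TensorProductSwaps.
Variables (K : fieldType) (V : vectType K) (r s : nat).
Variables (T : tensor V r) (S : tensor V s).

Lemma tprod_tperm_left (j k : 'I_r) : j != k -> lin_char_tensor true T ->
  forall w : {ffun 'I_(r + s) -> V},
  tprod T S [ffun i => w (tperm (lshift s j) (lshift s k) i)] = - tprod T S w.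
Proof.
move=> jk T_alt w; rewrite /tprod.
have -> : [ffun i => [ffun l => w (tperm (lshift s j) (lshift s k) l)] (rshift r i)]
          = [ffun i => w (rshift r i)].
  by apply/ffunP => i; rewrite !ffunE tpermD // eq_lrshift.
have -> : [ffun i => [ffun l => w (tperm (lshift s j) (lshift s k) l)] (lshift s i)]
          = [ffun i => [ffun l => w (lshift s l)] (tperm j k i)].
  by apply/ffunP => i; rewrite !ffunE -inj_tperm //; exact: lshift_inj.
by rewrite T_alt /lin_char odd_tperm jk mulN1r mulNr.
Qed.

Lemma tprod_tperm_right (j k : 'I_s) : j != k -> lin_char_tensor true S ->
  forall w : {ffun 'I_(r + s) -> V},
  tprod T S [ffun i => w (tperm (rshift r j) (rshift r k) i)] = - tprod T S w.
Proof.
move=> jk S_alt w; rewrite /tprod.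
have -> : [ffun i => [ffun l => w (tperm (rshift r j) (rshift r k) l)] (lshift s i)]
          = [ffun i => w (lshift s i)].
  by apply/ffunP => i; rewrite !ffunE tpermD // eq_rlshift.
have -> : [ffun i => [ffun l => w (tperm (rshift r j) (rshift r k) l)] (rshift r i)]
          = [ffun i => [ffun l => w (rshift r l)] (tperm j k i)].
  by apply/ffunP => i; rewrite !ffunE -inj_tperm //; exact: rshift_inj.
by rewrite S_alt /lin_char odd_tperm jk mulN1r mulrN.
Qed.

End TensorProductSwaps.

(* MathComp permutations do not compute, so concrete permutations are given by
   their lists of images, and a subgroup is enumerated by checking, by computation
   on [permutations (iota 0 n.+1)], that a given list of codes is exactly its set. *)
Section PermOfSeq.
Variable n : nat.

Definition perm_seq (s : seq 'I_n.+1) := uniq s && (size s == n.+1).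

Lemma perm_seq_nth_inj (s : seq 'I_n.+1) :
  perm_seq s -> injective (fun i : 'I_n.+1 => nth ord0 s i).
Proof.
by case/andP=> s_uniq /eqP s_size i j /eqP; rewrite nth_uniq ?s_size // => /eqP/val_inj.
Qed.

Definition perm_of_seq (s : seq 'I_n.+1) : 'S_n.+1 :=
  if insub s : option {s | perm_seq s} is Some u then perm (perm_seq_nth_inj (valP u))
  else 1%g.

Lemma perm_of_seqE s i : perm_seq s -> perm_of_seq s i = nth ord0 s i.
Proof. by move=> s_perm; rewrite /perm_of_seq insubT /= permE. Qed.

Lemma perm_of_seq_eq s (p : 'S_n.+1) :
  perm_seq s -> (forall i, p i = nth ord0 s i) -> perm_of_seq s = p.
Proof. by move=> s_perm pE; apply/permP => i; rewrite perm_of_seqE. Qed.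

Definition perm_code (p : 'S_n.+1) : seq nat := [seq val (p i) | i <- enum 'I_n.+1].

Lemma perm_code_inj : injective perm_code.
Proof.
move=> p q /eq_in_map pq; apply/permP => i.
by apply/val_inj/pq; rewrite mem_enum.
Qed.

Lemma perm_code_perm_of_seq s : perm_seq s -> perm_code (perm_of_seq s) = map val s.
Proof.
move=> s_perm; have /andP[_ /eqP s_size] := s_perm.
rewrite /perm_code (eq_map (fun i => congr1 val (perm_of_seqE i s_perm))).
by rewrite -[in RHS](mkseq_nth ord0 s) s_size /mkseq -val_enum_ord -!map_comp.
Qed.

Lemma perm_code_permutations p : perm_code p \in permutations (iota 0 n.+1).
Proof.
rewrite mem_permutations -val_enum_ord /perm_code map_comp; apply: perm_map.
apply: uniq_perm.
- by rewrite map_inj_uniq ?enum_uniq //; exact: perm_inj.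
- exact: enum_uniq.
- by move=> i; rewrite mem_enum; apply/mapP; exists (p^-1%g i); rewrite ?mem_enum ?permKV.
Qed.

Lemma preserves_perm_code (f : nat -> nat) (p : 'S_n.+1) :
  [forall i, f (p i) == f i] = (map f (perm_code p) == map f (iota 0 n.+1)).
Proof.
rewrite -val_enum_ord -!map_comp; apply/forallP/eqP => [pf|/eq_in_map pf i].
  by apply/eq_in_map => i _; apply/eqP/pf.
by apply/eqP/pf.
Qed.

Lemma big_preserving_perms (R : Type) (idx : R) (op : Monoid.com_law idx)
    (f : nat -> nat) (L : seq (seq 'I_n.+1)) (F : 'S_n.+1 -> R) :
  all perm_seq L -> uniq (map (map val) L) ->
  all (fun c => (map f c == map f (iota 0 n.+1)) == (c \in map (map val) L))
      (permutations (iota 0 n.+1)) ->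
  \big[op/idx]_(p : 'S_n.+1 | [forall i, f (p i) == f i]) F p =
  \big[op/idx]_(s <- L) F (perm_of_seq s).
Proof.
move=> L_perm L_uniq L_complete.
have codeL : map perm_code (map perm_of_seq L) = map (map val) L.
  by rewrite -map_comp; apply/eq_in_map => s /(allP L_perm)/perm_code_perm_of_seq.
rewrite -[LHS]big_filter -(big_map perm_of_seq xpredT); apply: perm_big.
apply: uniq_perm; first by rewrite filter_uniq // index_enum_uniq.
  by rewrite -(map_inj_uniq perm_code_inj) codeL.
move=> p; rewrite mem_filter mem_index_enum andbT preserves_perm_code.
have /eqP -> := allP L_complete _ (perm_code_permutations p).
by rewrite -codeL (mem_map perm_code_inj).
Qed.

End PermOfSeq.

Definition o0 : 'I_5 := @Ordinal 5 0 isT.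
Definition o1 : 'I_5 := @Ordinal 5 1 isT.
Definition o2 : 'I_5 := @Ordinal 5 2 isT.
Definition o3 : 'I_5 := @Ordinal 5 3 isT.
Definition o4 : 'I_5 := @Ordinal 5 4 isT.

Definition t'_row_seqs : seq (seq 'I_5) :=
  [:: [:: o0; o1; o2; o3; o4]; [:: o0; o3; o2; o1; o4];
      [:: o0; o1; o4; o3; o2]; [:: o0; o3; o4; o1; o2];
      [:: o2; o1; o0; o3; o4]; [:: o2; o3; o0; o1; o4];
      [:: o2; o1; o4; o3; o0]; [:: o2; o3; o4; o1; o0];
      [:: o4; o1; o0; o3; o2]; [:: o4; o3; o0; o1; o2];
      [:: o4; o1; o2; o3; o0]; [:: o4; o3; o2; o1; o0]].

Lemma t'_row_seqs_perm : all (@perm_seq 4) t'_row_seqs.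
Proof. by []. Qed.

Lemma sum_row_perm_t' (R : Type) (idx : R) (op : Monoid.com_law idx) (F : 'S_5 -> R) :
  \big[op/idx]_(p | row_perm t' p) F p =
  \big[op/idx]_(s <- t'_row_seqs) F (perm_of_seq s).
Proof. exact: (big_preserving_perms _ (f := fun i => (i %% 2)%N)). Qed.

Lemma col_antisym_t' (R : pzRingType) (F : 'S_5 -> R) :
  \sum_(q | col_perm t' q) (-1) ^+ odd_perm q * F q =
  F (perm_of_seq [:: o0; o1; o2; o3; o4]) - F (perm_of_seq [:: o1; o0; o2; o3; o4])
  - F (perm_of_seq [:: o0; o1; o3; o2; o4]) + F (perm_of_seq [:: o1; o0; o3; o2; o4]).
Proof.
rewrite (big_preserving_perms _ (f := fun i => (i %/ 2)%N)
  (L := [:: [:: o0; o1; o2; o3; o4]; [:: o1; o0; o2; o3; o4];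
            [:: o0; o1; o3; o2; o4]; [:: o1; o0; o3; o2; o4]])) //.
have odd0 : odd_perm (perm_of_seq [:: o0; o1; o2; o3; o4]) = false.
  rewrite (perm_of_seq_eq (p := 1%g)) ?odd_perm1 //.
  by move=> -[[|[|[|[|[|//]]]]] ?]; rewrite perm1; apply: val_inj.
have odd1 : odd_perm (perm_of_seq [:: o1; o0; o2; o3; o4]) = true.
  rewrite (perm_of_seq_eq (p := tperm o0 o1)) ?odd_tperm //.
  by move=> -[[|[|[|[|[|//]]]]] ?]; rewrite permE; apply: val_inj.
have odd2 : odd_perm (perm_of_seq [:: o0; o1; o3; o2; o4]) = true.
  rewrite (perm_of_seq_eq (p := tperm o2 o3)) ?odd_tperm //.
  by move=> -[[|[|[|[|[|//]]]]] ?]; rewrite permE; apply: val_inj.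
have odd3 : odd_perm (perm_of_seq [:: o1; o0; o3; o2; o4]) = false.
  rewrite (perm_of_seq_eq (p := tperm o0 o1 * tperm o2 o3)%g) ?odd_permM ?odd_tperm //.
  by move=> -[[|[|[|[|[|//]]]]] ?]; rewrite permM !permE; apply: val_inj.
rewrite !big_cons big_nil /= odd0 odd1 odd2 odd3 addr0.
by rewrite expr0 expr1 !mul1r !mulN1r !addrA.
Qed.

Section CurriedTensors.
Variables (K : fieldType) (V : vectType K).

Definition tensor2 (T : tensor V 2) (x y : V) : K :=
  T [ffun i : 'I_2 => nth x [:: x; y] i].
Definition tensor3 (S : tensor V 3) (x y z : V) : K :=
  S [ffun i : 'I_3 => nth x [:: x; y; z] i].

Lemma tprod23E (T : tensor V 2) (S : tensor V 3) (w : {ffun 'I_5 -> V}) :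
  tprod T S w = tensor2 T (w o0) (w o1) * tensor3 S (w o2) (w o3) (w o4).
Proof.
congr (T _ * S _); apply/ffunP => -[[|[|[|//]]] ?].
all: by rewrite !ffunE; congr (w _); apply: val_inj.
Qed.

Lemma tprod32E (S : tensor V 3) (T : tensor V 2) (w : {ffun 'I_5 -> V}) :
  tprod S T w = tensor3 S (w o0) (w o1) (w o2) * tensor2 T (w o3) (w o4).
Proof.
congr (S _ * T _); apply/ffunP => -[[|[|[|//]]] ?].
all: by rewrite !ffunE; congr (w _); apply: val_inj.
Qed.

Lemma tensor2_swap (T : tensor V 2) : lin_char_tensor true T ->
  forall x y, tensor2 T y x = - tensor2 T x y.
Proof.
move=> T_alt x y; have := T_alt [ffun i : 'I_2 => nth x [:: x; y] i] (tperm ord0 ord_max).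
rewrite /lin_char odd_tperm /= mulN1r => <-; congr T.
by apply/ffunP => -[[|[|//]] ?]; rewrite !ffunE permE.
Qed.

Lemma tensor3_swap01 (S : tensor V 3) : lin_char_tensor false S ->
  forall x y z, tensor3 S y x z = tensor3 S x y z.
Proof.
move=> S_sym x y z; rewrite /tensor3 -[RHS]mul1r.
rewrite -(S_sym _ (tperm ord0 (@Ordinal 3 1 isT))); congr S.
by apply/ffunP => -[[|[|[|//]]] ?]; rewrite !ffunE permE.
Qed.

Lemma tensor3_swap12 (S : tensor V 3) : lin_char_tensor false S ->
  forall x y z, tensor3 S x z y = tensor3 S x y z.
Proof.
move=> S_sym x y z; rewrite /tensor3 -[RHS]mul1r.
rewrite -(S_sym _ (tperm (@Ordinal 3 1 isT) ord_max)); congr S.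
by apply/ffunP => -[[|[|[|//]]] ?]; rewrite !ffunE permE.
Qed.

End CurriedTensors.

Section Symmetrization.
Variables (K : numFieldType) (V : vectType K).

Lemma alternating2_antisymmetrized (T : tensor V 2) : lin_char_tensor true T ->
  exists A : V -> V -> K, forall x y, tensor2 T x y = A x y - A y x.
Proof.
move=> T_alt; exists (fun x y => tensor2 T x y / 2%:R) => x y.
have two_neq0 : (2%:R : K) != 0 by rewrite pnatr_eq0.
by rewrite (tensor2_swap T_alt x y); field.
Qed.

Lemma symmetric3_symmetrized (S : tensor V 3) : lin_char_tensor false S ->
  exists B : V -> V -> V -> K, forall x y z, tensor3 S x y z =
    B x y z + B y x z + B x z y + B y z x + B z x y + B z y x.
Proof.
move=> S_sym; exists (fun x y z => tensor3 S x y z / 6%:R) => x y z.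
have s01 := tensor3_swap01 S_sym; have s12 := tensor3_swap12 S_sym.
rewrite (s12 z x y) (s01 x z y) (s12 y x z) (s01 x y z) (s12 x y z).
have six_neq0 : (6%:R : K) != 0 by rewrite pnatr_eq0.
by field.
Qed.

End Symmetrization.

Section RowSymmetrizedProducts.
Variables (K : fieldType) (V : vectType K) (T : tensor V 2) (S : tensor V 3).
Variables (v : {ffun 'I_5 -> V}) (c : seq 'I_5).
Hypothesis c_perm : perm_seq c.

Lemma sum_row_perm_t'_tprod23 :
  \sum_(p | row_perm t' p) tprod T S [ffun i => v (perm_of_seq c (p i))] =
  \sum_(s <- t'_row_seqs)
     tensor2 T (v (nth ord0 c (nth ord0 s 0))) (v (nth ord0 c (nth ord0 s 1))) *
     tensor3 S (v (nth ord0 c (nth ord0 s 2))) (v (nth ord0 c (nth ord0 s 3)))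
               (v (nth ord0 c (nth ord0 s 4))).
Proof.
rewrite sum_row_perm_t'; apply: eq_big_seq => s /(allP t'_row_seqs_perm) s_perm.
by rewrite tprod23E !ffunE !perm_of_seqE.
Qed.

Lemma sum_row_perm_t'_tprod32 :
  \sum_(p | row_perm t' p) tprod S T [ffun i => v (perm_of_seq c (p i))] =
  \sum_(s <- t'_row_seqs)
     tensor3 S (v (nth ord0 c (nth ord0 s 0))) (v (nth ord0 c (nth ord0 s 1)))
               (v (nth ord0 c (nth ord0 s 2))) *
     tensor2 T (v (nth ord0 c (nth ord0 s 3))) (v (nth ord0 c (nth ord0 s 4))).
Proof.
rewrite sum_row_perm_t'; apply: eq_big_seq => s /(allP t'_row_seqs_perm) s_perm.
by rewrite tprod32E !ffunE !perm_of_seqE.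
Qed.

End RowSymmetrizedProducts.

(* Writing T and S as (anti)symmetrizations of arbitrary forms A and B turns the
   vanishing into an identity of commutative polynomials in the values of A and B. *)
Lemma young_star_t'_alternating_symmetric (K : numFieldType) (V : vectType K)
    (T : tensor V 2) (S : tensor V 3) :
  lin_char_tensor true T -> lin_char_tensor false S -> forall v,
  gr_act (gr_star (young_sym K t')) (tprod T S) v = 0 /\
  gr_act (gr_star (young_sym K t')) (tprod S T) v = 0.
Proof.
move=> /alternating2_antisymmetrized[A TA] /symmetric3_symmetrized[B SB] v.
rewrite !young_star_act !col_antisym_t'.
rewrite !sum_row_perm_t'_tprod23 // !sum_row_perm_t'_tprod32 //.
rewrite /t'_row_seqs !big_cons !big_nil /= !TA !SB.
by split; ring.
Qed.

Lemma partitions_of_2 l : is_partition 2 l -> l = [:: 2%N] \/ l = [:: 1%N; 1%N].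
Proof.
rewrite /is_partition; case: l => [|a [|b [|c l]]] /= l_part.
- lia.
- by left; congr [:: _]; lia.
- by right; congr [:: _; _]; lia.
- lia.
Qed.

Lemma partitions_of_3 l : is_partition 3 l ->
  [\/ l = [:: 3%N], l = [:: 2%N; 1%N] | l = [:: 1%N; 1%N; 1%N]].
Proof.
rewrite /is_partition; case: l => [|a [|b [|c [|d l]]]] /= l_part.
- lia.
- by apply: Or31; congr [:: _]; lia.
- by apply: Or32; congr [:: _; _]; lia.
- by apply: Or33; congr [:: _; _; _]; lia.
- lia.
Qed.

Lemma theorem1p8_claim_numField (K : numFieldType) : theorem1p8_claim K.
Proof.
move=> l lh /partitions_of_2 l_shape /partitions_of_3 lh_shape not_excluded V I Ih
  [I_right _ _] I_class [Ih_right _ _] Ih_class T Th T_class Th_class v.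
case: lh_shape => lhE; subst lh.
- have [lE | lE] := l_shape; subst l; first by [].
  have T_alt := of_class_column_alternating I_right I_class T_class.
  have Th_sym := of_class_row_symmetric Ih_right Ih_class Th_class.
  exact: young_star_t'_alternating_symmetric.
- by case: l_shape not_excluded => ->.
- have Th_alt := of_class_column_alternating Ih_right Ih_class Th_class.
  split.
  + apply: (young_star_alternating_row_eq0 (x := rshift 2 (ord0 : 'I_3))
                                            (y := rshift 2 ord_max)) => //.
    exact: tprod_tperm_right.
  + apply: (young_star_alternating_row_eq0 (x := lshift 2 (ord0 : 'I_3))
                                            (y := lshift 2 ord_max)) => //.
    exact: tprod_tperm_left.
Qed.

Theorem theorem1p8 : theorem1p8_claim R /\ theorem1p8_claim R[i].
Proof. by split; apply: theorem1p8_claim_numField. Qed.
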